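(* Let $(\mathcal{G},\alpha)$ be an abstract GKM graph and $p\neq q$ vertices. Set $P=\prod_{e\in\mathcal{E}_p\setminus\mathcal{E}_{pq}}\alpha(e)$, $Q=\prod_{e\in\mathcal{E}_q\setminus\mathcal{E}_{qp}}\alpha(e)$, for $e\in\mathcal{E}_{pq}$ let $c(e)=|\{e'\in\mathcal{E}_{pq}: e'\neq e,\ \alpha(\overline{e'})=-\alpha(e')\}|$, and let $E=\{e\in\mathcal{E}_{pq}: c(e)\text{ even}\}$, $O=\{e\in\mathcal{E}_{pq}: c(e)\text{ odd}\}$. Then $P-Q$ is divisible by $\prod_{e\in E}\alpha(e)$ and $P+Q$ is divisible by $\prod_{e\in O}\alpha(e)$ in $H^*(BT)$.
   Context: $H^*(BT)=\mathbb{Z}[x_1,\dots,x_r]$ with $\deg x_i=2$. Let $\mathcal{G}$ be a finite $n$-valent undirected graph (multiple edges allowed, no loops) with vertex set $\mathcal{V}$ and set of directed edges $\mathcal{E}$; for $e\in\mathcal{E}$, $\overline e$ is the reversed edge, $i(e),t(e)$ its initial and terminal vertices, $\mathcal{E}_p=\{e: i(e)=p\}$, $\mathcal{E}_{pq}=\{e: i(e)=p,\ t(e)=q\}$. An axial function $\alpha:\mathcal{E}\to H^2(BT)$ satisfies: $\alpha(\overline e)=\pm\alpha(e)$; $\alpha(e),\alpha(e')$ linearly independent over $\mathbb{Z}$ if $e\ne e'$, $i(e)=i(e')$; coefficients of each $\alpha(e)$ have gcd $1$. An abstract GKM graph is such $(\mathcal{G},\alpha)$ admitting a parallel transport, i.e.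 bijections $\mathcal{P}_e:\mathcal{E}_{i(e)}\to\mathcal{E}_{t(e)}$ with $\mathcal{P}_{\overline e}=\mathcal{P}_e^{-1}$, $\mathcal{P}_e(e)=\overline e$, $\alpha(\mathcal{P}_e(e'))-\alpha(e')\in\mathbb{Z}\alpha(e)$ for all $e'\in\mathcal{E}_{i(e)}$. *)

From HB Require Import structures.
From mathcomp Require Import all_boot all_order all_algebra.
From mathcomp Require Import mpoly.
Set Implicit Arguments. Unset Strict Implicit. Unset Printing Implicit Defensive.
Import Order.TTheory GRing.Theory Num.Theory.
Local Open Scope ring_scope.

(* H^*(BT) = Z[x_1,...,x_r] is {mpoly int[r]};
   H^2(BT) is the free Z-module of integral linear forms, represented by
   coefficient vectors 'rV[int]_r, embedded into H^*(BT) by [lin]. *)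
Definition lin (r : nat) (v : 'rV[int]_r) : {mpoly int[r]} :=
  \sum_(i < r) (v ord0 i)%:MP * 'X_i.

(* A finite n-valent graph without loops (multiple edges allowed):
   V vertices, E directed edges, rev the reversal, src/tgt = i(e), t(e). *)
Record graph (n : nat) := Graph {
  V : finType;
  E : finType;
  src : E -> V;
  tgt : E -> V;
  rev : E -> E;
  revK : involutive rev;
  src_rev : forall e, src (rev e) = tgt e;
  no_loop : forall e, src e != tgt e;
  valent : forall p : V, #|[set e | src e == p]| = n
}.

Definition axial (n r : nat) (G : graph n) (alpha : E G -> 'rV[int]_r) : Prop :=
  (forall e, alpha (rev e) = alpha e \/ alpha (rev e) = - alpha e) /\
  (forall e e', e != e' -> src e = src e' ->
     forall a b : int, a *: alpha e + b *: alpha e' = 0 -> a = 0 /\ b = 0) /\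
  (forall e (d : int), (forall i, (d %| alpha e ord0 i)%Z) -> `|d| = 1).

Definition parallel_transport (n r : nat) (G : graph n)
  (alpha : E G -> 'rV[int]_r) (PT : E G -> E G -> E G) : Prop :=
  forall e e', src e' = src e ->
    [/\ src (PT e e') = tgt e,
        PT (rev e) (PT e e') = e',
        PT e e = rev e &
        exists k : int, alpha (PT e e') - alpha e' = k *: alpha e].

Definition abstract_GKM (n r : nat) (G : graph n) (alpha : E G -> 'rV[int]_r) : Prop :=
  axial alpha /\ exists PT, parallel_transport alpha PT.

Definition mdvd (r : nat) (a b : {mpoly int[r]}) : Prop :=
  exists c : {mpoly int[r]}, b = c * a.

Definition cnt (n r : nat) (G : graph n) (alpha : E G -> 'rV[int]_r)
  (p q : V G) (e : E G) : nat :=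
  #|[set e' | [&& src e' == p, tgt e' == q, e' != e & alpha (rev e') == - alpha e']]|.

From Pilot Require Import Defs.
From HB Require Import structures.
From mathcomp Require Import all_boot all_order all_algebra.
From mathcomp Require Import mpoly ring.
Set Implicit Arguments. Unset Strict Implicit. Unset Printing Implicit Defensive.
Import Order.TTheory GRing.Theory Num.Theory.
Local Open Scope ring_scope.

(* Parallel transport along an edge e from p to q is a bijection from
   E_p \ {e} onto E_q \ {rev e} that preserves weights modulo alpha(e), so the
   weight products over these two sets agree modulo alpha(e).  The first is P
   times the weights of the other edges from p to q; the second is Q times the
   weights of their reverses, which agree with them up to the sign (-1)^c(e).
   A unimodular change of variables turns the primitive linear form alpha(e)
   into a variable, so alpha(e) is prime in Z[x_1,...,x_r]; as it divides no
   other weight at p, the common factor cancels and alpha(e) divides P - Q or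
   P + Q according to the parity of c(e).  Distinct edges at p carry pairwise
   non-associated prime weights, hence their product divides as well. *)

Section Divisibility.
Variable r : nat.
Implicit Types (a x y : {mpoly int[r]}).

Lemma mdvdr0 a : mdvd a 0.
Proof. by exists 0; rewrite mul0r. Qed.

Lemma mdvdrD a x y : mdvd a x -> mdvd a y -> mdvd a (x + y).
Proof. by move=> [c ->] [d ->]; exists (c + d); rewrite mulrDl. Qed.

Lemma mdvdrN a x : mdvd a x -> mdvd a (- x).
Proof. by move=> [c ->]; exists (- c); rewrite mulNr. Qed.

Lemma mdvdr_mull a x y : mdvd a x -> mdvd a (y * x).
Proof. by move=> [c ->]; exists (y * c); rewrite mulrA. Qed.

Lemma mdvdrZ a x (c : int) : mdvd a x -> mdvd a (c *: x).
Proof. by move=> [d ->]; exists (c *: d); rewrite scalerAl. Qed.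

Lemma mdvdr_sum a (I : Type) (s : seq I) (P : pred I) (F : I -> {mpoly int[r]}) :
  (forall i, P i -> mdvd a (F i)) -> mdvd a (\sum_(i <- s | P i) F i).
Proof. by move=> dvdF; apply: big_ind => //; [exact: mdvdr0 | exact: mdvdrD]. Qed.

Lemma mdvdr_prodB a (I : Type) (s : seq I) (P : pred I)
    (F G : I -> {mpoly int[r]}) :
  (forall i, P i -> mdvd a (F i - G i)) ->
  mdvd a (\prod_(i <- s | P i) F i - \prod_(i <- s | P i) G i).
Proof.
move=> dvdFG; apply: (big_ind2 (fun x y => mdvd a (x - y))) => //.
  by rewrite subrr; exact: mdvdr0.
move=> x1 y1 x2 y2 dvd1 dvd2.
have -> : x1 * x2 - y1 * y2 = x2 * (x1 - y1) + y1 * (x2 - y2) by ring.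
by apply: mdvdrD; apply: mdvdr_mull.
Qed.

Definition mprime a := forall x y, mdvd a (x * y) -> mdvd a x \/ mdvd a y.

Lemma mprime_prod_cancel a (I : eqType) (s : seq I) (P : pred I)
    (F : I -> {mpoly int[r]}) y :
  mprime a -> (forall i, i \in s -> P i -> ~ mdvd a (F i)) ->
  mdvd a ((\prod_(i <- s | P i) F i) * y) -> mdvd a y.
Proof.
move=> prime_a; elim: s => [|i s IHs] ndvdF; first by rewrite big_nil mul1r.
have ndvdFs : forall j, j \in s -> P j -> ~ mdvd a (F j).
  by move=> j js; apply: ndvdF; rewrite inE js orbT.
rewrite big_cons; case: ifP => Pi; last exact: IHs.
by rewrite -mulrA => /prime_a [/(ndvdF i (mem_head _ _) Pi)|/IHs]; last exact.
Qed.

Lemma mdvdr_prod (I : eqType) (s : seq I) (P : pred I) (F : I -> {mpoly int[r]}) x :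
  uniq s -> (forall i, P i -> mprime (F i)) ->
  (forall i j, P i -> P j -> i != j -> ~ mdvd (F i) (F j)) ->
  (forall i, P i -> mdvd (F i) x) -> mdvd (\prod_(i <- s | P i) F i) x.
Proof.
move=> + primeF ndvdF dvdF; elim: s => [|i s IHs] /=; first by exists x; rewrite big_nil mulr1.
move=> /andP [s'i uniq_s]; have [c def_x] := IHs uniq_s.
rewrite big_cons; case: ifP => Pi; last by exists c.
have [d def_c] : mdvd (F i) c.
  apply: (mprime_prod_cancel (s := s) (P := P) (F := F) (primeF i Pi)).
    by move=> j js Pj; apply: ndvdF => //; apply: contraNneq s'i => ->.
  by rewrite mulrC -def_x; apply: dvdF.
by exists d; rewrite def_x def_c mulrA.
Qed.

End Divisibility.

Section LinearForms.
Variable r : nat.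
Implicit Types (u v w : 'rV[int]_r) (f : {mpoly int[r]}).

Definition primitive v := forall d : int, (forall i, (d %| v ord0 i)%Z) -> `|d| = 1.

Lemma linD u w : lin (u + w) = lin u + lin w.
Proof. by rewrite /lin -big_split; apply: eq_bigr => i _; rewrite mxE rmorphD mulrDl. Qed.

Lemma linZ (k : int) u : lin (k *: u) = k%:MP * lin u.
Proof. by rewrite /lin mulr_sumr; apply: eq_bigr => i _; rewrite mxE rmorphM mulrA. Qed.

Lemma linN u : lin (- u) = - lin u.
Proof. by rewrite -scaleN1r linZ rmorphN1 mulN1r. Qed.

Lemma lin_delta (i : 'I_r) : lin (delta_mx 0 i) = 'X_i.
Proof.
rewrite /lin (bigD1 i) //= big1 ?addr0; first by rewrite mxE !eqxx mul1r.
by move=> j /negbTE ji; rewrite mxE eq_sym ji /= mul0r.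
Qed.

Lemma comp_mpolyX_mktuple (k : nat) (F : 'I_r -> {mpoly int[k]}) (i : 'I_r) :
  'X_i \mPo [tuple F j | j < r] = F i.
Proof. by rewrite comp_mpolyXU -tnth_nth tnth_mktuple. Qed.

Lemma comp_mpolyA (k l : nat) f (lq : r.-tuple {mpoly int[k]})
    (lr : k.-tuple {mpoly int[l]}) :
  (f \mPo lq) \mPo lr = f \mPo [tuple tnth lq i \mPo lr | i < r].
Proof.
rewrite [f \mPo lq]comp_mpolyE [RHS]comp_mpolyE raddf_sum /=; apply: eq_bigr => m _.
rewrite comp_mpolyZ rmorph_prod /=; congr (_ *: _); apply: eq_bigr => i _.
by rewrite rmorphXn /= tnth_mktuple.
Qed.

Lemma comp_mpoly_lin w (M : 'M[int]_r) :
  lin w \mPo [tuple lin (row i M) | i < r] = lin (w *m M).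
Proof.
rewrite /lin rmorph_sum /=.
under eq_bigr => i _ do rewrite rmorphM /= comp_mpolyC comp_mpolyX_mktuple /lin mulr_sumr.
rewrite exchange_big /=; apply: eq_bigr => j _.
rewrite mxE rmorph_sum /= mulr_suml; apply: eq_bigr => i _.
by rewrite mxE rmorphM mulrA.
Qed.

Definition zero_var (j : 'I_r) : r.-tuple {mpoly int[r]} :=
  [tuple if i == j then 0 else 'X_i | i < r].

Lemma comp_zero_varX (j : 'I_r) : 'X_j \mPo zero_var j = 0.
Proof. by rewrite comp_mpolyX_mktuple eqxx. Qed.

Lemma mdvdX_sub_zero_var (j : 'I_r) f : mdvd 'X_j (f - (f \mPo zero_var j)).
Proof.
rewrite comp_mpolyEX {1}(mpolyE f) -sumrB; apply: mdvdr_sum => m _.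
rewrite -scalerBr; apply: mdvdrZ; rewrite comp_mpolyX (mpolyXE_id _ m).
have [mj0|mj_gt0] := posnP (m j).
  suff -> : \prod_(i < r) tnth (zero_var j) i ^+ m i = \prod_(i < r) 'X_i ^+ m i.
    by rewrite subrr; exact: mdvdr0.
  apply: eq_bigr => i _; rewrite tnth_mktuple; case: eqP => // ->.
  by rewrite mj0 !expr0.
rewrite [X in _ - X](bigD1 j) //= tnth_mktuple eqxx expr0n gtn_eqF // mul0r subr0.
rewrite (bigD1 j) //= mulrC -(prednK mj_gt0) exprSr mulrA.
by exists (\prod_(i < r | i != j) 'X_i ^+ m i * 'X_j ^+ (m j).-1).
Qed.

Lemma mprimeX (j : 'I_r) : mprime 'X_j.
Proof.
have dvdX f : f \mPo zero_var j = 0 -> mdvd 'X_j f.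
  by move=> f0; have := mdvdX_sub_zero_var j f; rewrite f0 subr0.
move=> x y [c def_xy].
have : (x \mPo zero_var j) * (y \mPo zero_var j) = 0.
  by rewrite -rmorphM /= def_xy rmorphM /= comp_zero_varX mulr0.
by move/eqP; rewrite mulf_eq0 => /orP [] /eqP /dvdX; [left | right].
Qed.

Lemma mcoeff_zero_var_lin w (j k : 'I_r) : k != j ->
  (lin w \mPo zero_var j)@_U_(k) = w ord0 k.
Proof.
move=> kj; rewrite /lin rmorph_sum raddf_sum /= (bigD1 k) //= big1 ?addr0.
  rewrite rmorphM /= comp_mpolyC comp_mpolyX_mktuple (negbTE kj).
  by rewrite mcoeffCM mcoeffXU eqxx mulr1.
move=> i ik; rewrite rmorphM /= comp_mpolyC comp_mpolyX_mktuple mcoeffCM.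
by case: eqP => _; rewrite ?mcoeff0 ?mcoeffXU ?(negbTE ik) mulr0.
Qed.

(* Via the Smith normal form of v, seen as a 1 x r matrix. *)
Lemma primitive_unimodular_row v : primitive v ->
  exists (i0 : 'I_r) (R : 'M[int]_r) (s : int),
    [/\ R \in unitmx, v = s *: row i0 R & s * s = 1].
Proof.
move=> prim_v.
have r_gt0 : (0 < r)%N.
  case: (posnP r) => // r0; suff: `|2%:Z| = 1 by [].
  apply: prim_v => i; suff : (i < 0)%N by [].
  by rewrite -[X in (_ < X)%N]r0 ltn_ord.
have [L _ [R unitR [d _ def_v]]] := int_Smith_normal_form v.
pose i0 := Ordinal r_gt0; pose s := L ord0 ord0 * d`_0.
have vE j : v ord0 j = s * R i0 j.
  rewrite def_v mxE (bigD1 i0) //= big1 ?addr0.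
    by rewrite mxE big_ord1 mxE /= mulr1n.
  move=> k k'i0; rewrite mxE big_ord1 mxE /=.
  have -> : (0%N == k :> nat) = false by apply/negbTE; rewrite eq_sym.
  by rewrite mulr0n mulr0 mul0r.
have norm_s : `|s| = 1 by apply: prim_v => i; rewrite vE; apply: dvdz_mulr.
exists i0, R, s; split => //; first by apply/rowP => j; rewrite vE !mxE.
by rewrite -expr2 -real_normK ?num_real // norm_s expr1n.
Qed.

Section ChangeOfVariables.
Variables (v : 'rV[int]_r) (i0 : 'I_r) (R : 'M[int]_r) (s : int).
Hypotheses (unitR : R \in unitmx) (def_v : v = s *: row i0 R) (ss1 : s * s = 1).

Let to_new := [tuple lin (row i (invmx R)) | i < r].
Let to_old := [tuple lin (row i R) | i < r].

Lemma row_mulmx_invmx : v *m invmx R = s *: delta_mx 0 i0.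
Proof. by rewrite def_v -scalemxAl -row_mul mulmxV // row1. Qed.

Lemma comp_lin_invmx : lin v \mPo to_new = s%:MP * 'X_i0.
Proof. by rewrite comp_mpoly_lin row_mulmx_invmx linZ lin_delta. Qed.

Lemma comp_invmxK f : (f \mPo to_new) \mPo to_old = f.
Proof.
rewrite comp_mpolyA -[RHS]comp_mpoly_id; congr (f \mPo _).
apply: eq_mktuple => i; rewrite tnth_mktuple comp_mpoly_lin -row_mul mulVmx //.
by rewrite row1 lin_delta.
Qed.

Lemma mprime_lin_unimodular : mprime (lin v).
Proof.
move=> x y [c def_xy].
have X_old : 'X_i0 \mPo to_old = s%:MP * lin v.
  by rewrite comp_mpolyX_mktuple def_v linZ mulrA -rmorphM ss1 rmorph1 mul1r.
have : mdvd 'X_i0 ((x \mPo to_new) * (y \mPo to_new)).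
  by exists ((c \mPo to_new) * s%:MP); rewrite -rmorphM def_xy rmorphM /= comp_lin_invmx mulrA.
case/mprimeX => -[g def_g]; [left | right]; exists ((g \mPo to_old) * s%:MP).
  by rewrite -[x]comp_invmxK def_g rmorphM /= X_old mulrA.
by rewrite -[y]comp_invmxK def_g rmorphM /= X_old mulrA.
Qed.

Lemma mdvd_lin_unimodular w : mdvd (lin v) (lin w) -> exists t : int, w = t *: v.
Proof.
move=> [c def_w]; have [w' def_w'] : {w' | w *m invmx R = w'} by exists (w *m invmx R).
have w'_zero : lin w' \mPo zero_var i0 = 0.
  rewrite -def_w' -comp_mpoly_lin def_w !rmorphM /= comp_lin_invmx rmorphM /=.
  by rewrite comp_zero_varX !mulr0.
have w'_supp k : k != i0 -> w' ord0 k = 0.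
  by move=> ki0; rewrite -(mcoeff_zero_var_lin w' ki0) w'_zero mcoeff0.
exists (w' ord0 i0 * s); apply: (can_inj (mulmxKV unitR)) => /=.
rewrite def_w' -scalemxAl row_mulmx_invmx scalerA -mulrA ss1 mulr1.
apply/rowP => k; rewrite !mxE.
have [->|ki0] := eqVneq k i0; first by rewrite !eqxx mulr1.
by rewrite w'_supp // andbF mulr0.
Qed.

End ChangeOfVariables.

Lemma mprime_lin v : primitive v -> mprime (lin v).
Proof.
move=> /primitive_unimodular_row [i0 [R [s [unitR def_v ss1]]]].
exact: mprime_lin_unimodular unitR def_v ss1.
Qed.

Lemma lin_ndvd v w : primitive v ->
  (forall a b : int, a *: v + b *: w = 0 -> a = 0 /\ b = 0) -> ~ mdvd (lin v) (lin w).
Proof.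
move=> /primitive_unimodular_row [i0 [R [s [unitR def_v ss1]]]] indep.
move=> /(mdvd_lin_unimodular unitR def_v ss1) [t def_w].
have [_ /eqP] : - t = 0 /\ 1 = 0 :> int; last by rewrite oner_eq0.
by apply: indep; rewrite def_w scale1r scaleNr addNr.
Qed.

End LinearForms.

Local Notation rev := Defs.rev.

Section EdgeDivisibility.
Variables (n r : nat) (G : graph n) (alpha : E G -> 'rV[int]_r).
Implicit Types (e f : E G) (x y : V G).

Definition away_prod x y := \prod_(f | (src f == x) && (tgt f != y)) lin (alpha f).

Definition star_prodD1 e := \prod_(f | (src f == src e) && (f != e)) lin (alpha f).

Definition parallel_prodD1 e :=
  \prod_(f | [&& src f == src e, tgt f == tgt e & f != e]) lin (alpha f).

Lemma tgt_rev f : tgt (rev f) = src f.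
Proof. by rewrite -[in RHS](Defs.revK f) src_rev. Qed.

Lemma star_prodD1E e : star_prodD1 e = parallel_prodD1 e * away_prod (src e) (tgt e).
Proof.
rewrite /star_prodD1 (bigID (fun f => tgt f == tgt e)) /=; congr (_ * _).
  by apply: eq_bigl => f; rewrite andbAC -andbA.
apply: eq_bigl => f; have [->|_] := eqVneq f e; first by rewrite !eqxx.
by rewrite andbT.
Qed.

Hypothesis alpha_rev : forall e, alpha (rev e) = alpha e \/ alpha (rev e) = - alpha e.

Lemma lin_alpha_rev f :
  lin (alpha (rev f)) = (if alpha (rev f) == - alpha f then -1 else 1) * lin (alpha f).
Proof.
case: eqP => [->|]; first by rewrite linN mulN1r.
by case: (alpha_rev f) => // ->; rewrite mul1r.
Qed.

Lemma parallel_prodD1_rev e :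
  parallel_prodD1 (rev e) = (-1) ^+ cnt alpha (src e) (tgt e) e * parallel_prodD1 e.
Proof.
rewrite /parallel_prodD1 (reindex_inj (inv_inj (@Defs.revK _ G))) /= src_rev tgt_rev.
under eq_bigl => f do rewrite src_rev tgt_rev (inj_eq (inv_inj (@Defs.revK _ G))) andbCA.
under eq_bigr => f _ do rewrite lin_alpha_rev.
rewrite big_split /= (bigID (fun f => alpha (rev f) == - alpha f)) /=.
rewrite [X in _ * X * _]big1 => [|f /andP [_ /negbTE ->] //].
rewrite mulr1 /cnt -prodr_const; congr (_ * _); apply: eq_big => [f|f /andP [_ ->] //].
by rewrite inE -!andbA.
Qed.

Variable PT : E G -> E G -> E G.
Hypothesis PT_transport : parallel_transport alpha PT.

Lemma star_prodD1_transport e :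
  star_prodD1 (rev e) = \prod_(f | (src f == src e) && (f != e)) lin (alpha (PT e f)).
Proof.
have PT_revK f : src f = tgt e -> PT e (PT (rev e) f) = f.
  move=> ftgt; have [_ + _ _] := PT_transport (etrans ftgt (esym (src_rev e))).
  by rewrite Defs.revK.
have PT_rev_rev : PT (rev e) (rev e) = e.
  by have [_ _ -> _] := PT_transport (erefl (src (rev e))); rewrite Defs.revK.
rewrite /star_prodD1 src_rev (reindex_onto (PT e) (PT (rev e))) /=; last first.
  by move=> f /andP [/eqP /PT_revK].
apply: eq_bigl => f; have [fsrc|f'src] := eqVneq (src f) (src e).
  have [-> PTK PT_ee _] := PT_transport fsrc.
  rewrite PTK !eqxx /= andbT; congr negb; apply/eqP/eqP => [PTe|-> //].
  by rewrite -PTK PTe PT_rev_rev.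
apply/negbTE/negP => /andP [/andP [/eqP PTsrc _] /eqP PTK].
have [PTtgt _ _ _] := PT_transport (etrans PTsrc (esym (src_rev e))).
by move: f'src; rewrite -PTK PTtgt tgt_rev eqxx.
Qed.

Lemma mdvd_star_prodD1_rev e : mdvd (lin (alpha e)) (star_prodD1 (rev e) - star_prodD1 e).
Proof.
rewrite star_prodD1_transport; apply: mdvdr_prodB => f /andP [/eqP fsrc _].
have [_ _ _ [k PTf]] := PT_transport fsrc.
by exists k%:MP; rewrite -linN -linD PTf linZ.
Qed.

Hypothesis alpha_indep : forall e e', e != e' -> src e = src e' ->
  forall a b : int, a *: alpha e + b *: alpha e' = 0 -> a = 0 /\ b = 0.
Hypothesis alpha_primitive : forall e, primitive (alpha e).

Lemma mdvd_away_prod e :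
  let P := away_prod (src e) (tgt e) in let Q := away_prod (tgt e) (src e) in
  if odd (cnt alpha (src e) (tgt e) e) then mdvd (lin (alpha e)) (P + Q)
  else mdvd (lin (alpha e)) (P - Q).
Proof.
move=> P Q; have := mdvd_star_prodD1_rev e.
rewrite !star_prodD1E parallel_prodD1_rev src_rev tgt_rev -/P -/Q.
set c := cnt _ _ _ _; set R := parallel_prodD1 e.
have -> : (-1) ^+ c * R * Q - R * P = R * ((-1) ^+ c * Q - P) by ring.
move=> /(mprime_prod_cancel (mprime_lin (@alpha_primitive e))) dvdQP.
have {}dvdQP : mdvd (lin (alpha e)) ((-1) ^+ odd c * Q - P).
  rewrite signr_odd; apply: dvdQP => f _ /and3P [/eqP fsrc _ f'e].
  by apply: lin_ndvd => //; apply: alpha_indep; rewrite // eq_sym.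
case: (odd c) dvdQP => /mdvdrN; rewrite opprB; first by rewrite mulN1r opprK.
by rewrite mul1r.
Qed.

End EdgeDivisibility.

Theorem corollary4p2 (n r : nat) (G : graph n) (alpha : E G -> 'rV[int]_r)
  (hGKM : abstract_GKM alpha) (p q : V G) (hpq : p != q) :
  let P := \prod_(e | (src e == p) && (tgt e != q)) lin (alpha e) in
  let Q := \prod_(e | (src e == q) && (tgt e != p)) lin (alpha e) in
  mdvd (\prod_(e | [&& src e == p, tgt e == q & ~~ odd (cnt alpha p q e)]) lin (alpha e))
       (P - Q) /\
  mdvd (\prod_(e | [&& src e == p, tgt e == q & odd (cnt alpha p q e)]) lin (alpha e))
       (P + Q).
Proof.
move=> P Q; have [[alpha_rev [alpha_indep alpha_primitive]] [PT PT_transport]] := hGKM.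
have edge_dvd := mdvd_away_prod alpha_rev PT_transport alpha_indep alpha_primitive.
have prime_alpha f : mprime (lin (alpha f)) by apply: mprime_lin; apply: alpha_primitive.
have ndvd_alpha f g : src f = p -> src g = p -> f != g ->
    ~ mdvd (lin (alpha f)) (lin (alpha g)).
  move=> fp gp fg; apply: lin_ndvd (alpha_primitive f) _.
  by apply: alpha_indep; rewrite ?fp ?gp.
split; apply: (mdvdr_prod (index_enum_uniq (E G))) => [f _ | f g | f].
- exact: prime_alpha.
- by move=> /and3P [/eqP fp _ _] /and3P [/eqP gp _ _]; apply: ndvd_alpha.
- by move=> /and3P [/eqP fp /eqP fq /negbTE c_even]; move: (edge_dvd f); rewrite fp fq c_even.
- exact: prime_alpha.
- by move=> /and3P [/eqP fp _ _] /and3P [/eqP gp _ _]; apply: ndvd_alpha.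
- by move=> /and3P [/eqP fp /eqP fq c_odd]; move: (edge_dvd f); rewrite fp fq c_odd.
Qed.
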